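(* Fix $0<\alpha<2\le\kappa$. Let $X_1$ be the number of potential offspring of a given parent pair in a generation where, with probability $\varepsilon_N\in(0,1)$, $X_1\vartriangleright\mathbb L(\alpha,\zeta(N))$ and otherwise $X_1\vartriangleright\mathbb L(\kappa,\zeta(N))$. Suppose that, as $N\to\infty$, $\varepsilon_N=O(\zeta(N)^{\alpha-1})$ when $0<\alpha<1$, $\varepsilon_N=O(1/\log\zeta(N))$ when $\alpha=1$, and $\varepsilon_N=O(1)$ when $\alpha>1$. Then $\limsup_{N\to\infty}\mathbb E[X_1]<\infty$.
   Context: For $a>0$ and a positive integer-valued deterministic function $\zeta(N)$, $X\vartriangleright\mathbb L(a,\zeta(N))$ means: $\mathbb P(X\le\zeta(N))=1$, the mass outside $\{2,\dots,\zeta(N)\}$ lies on $\{0,1\}$, and for $k\in\{2,\dots,\zeta(N)\}$, $g_a(k)(k^{-a}-(1+k)^{-a})\le\mathbb P(X=k)\le f_a(k)(k^{-a}-(1+k)^{-a})$, where $g_a\le f_a$ are bounded positive functions on $\mathbb N$ with $\inf_k\sup_{i\ge k}f_a(i)<\infty$ and $\sup_k\inf_{i\ge k}g_a(i)>0$, and it is assumed that $\mathbb E[X]>2$. *)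

From HB Require Import structures.
From mathcomp Require Import all_boot all_order all_algebra.
From mathcomp Require Import all_classical all_reals all_analysis.
Set Implicit Arguments. Unset Strict Implicit. Unset Printing Implicit Defensive.
Import Order.TTheory GRing.Theory Num.Theory.
Import numFieldNormedType.Exports.
Local Open Scope ring_scope.

Definition mean_upto {R : realType} (z : nat) (p : nat -> R) : R :=
  \sum_(k < z.+1) (k%:R * p k).

(* Admissible envelope functions (g_a <= f_a) of the class L(a, .):
   bounded positive functions with inf_k sup_{i>=k} f(i) < oo
   and sup_k inf_{i>=k} g(i) > 0 (written out via eventual bounds). *)
Definition admissible_envelopes {R : realType} (f g : nat -> R) : Prop :=
  [/\ (forall k, 0 < g k), (forall k, g k <= f k),
      (exists M : R, forall k, f k <= M /\ g k <= M),
      (exists M : R, exists k0, forall i, (k0 <= i)%N -> f i <= M) &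
      (exists c : R, 0 < c /\ exists k0, forall i, (k0 <= i)%N -> c <= g i)].

(* X |> L(a, z) with envelopes f_a = f, g_a = g, expressed on the law
   p : nat -> R of X (p k = P(X = k)). *)
Definition in_L {R : realType} (a : R) (f g : nat -> R) (z : nat) (p : nat -> R)
  : Prop :=
  [/\ (forall k, 0 <= p k),
      (forall k, (z < k)%N -> p k = 0),
      \sum_(k < z.+1) p k = 1,
      (forall k : nat, (2 <= k <= z)%N ->
         g k * (k%:R `^ (- a) - (1 + k%:R) `^ (- a)) <= p k /\
         p k <= f k * (k%:R `^ (- a) - (1 + k%:R) `^ (- a))) &
      2 < mean_upto z p].

From HB Require Import structures.
From mathcomp Require Import all_boot all_order all_algebra.
From mathcomp Require Import all_classical all_reals all_analysis.
From mathcomp Require Import ring lra.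
Import Order.TTheory GRing.Theory Num.Theory.
Import numFieldNormedType.Exports.
Local Open Scope classical_set_scope.
Local Open Scope ring_scope.

(* Tail bounds give P(X = k) <= M (k^-a - (k+1)^-a) <= M a k^(-a-1), so
   E[X] <= 1 + M a (2^-a + ... + z^-a).  Comparing with the antiderivative of
   t^-a, this partial sum is O(1) for a > 1, O(log z) for a = 1 and
   O(z^(1-a)) for a < 1; the hypothesis on eps_N exactly cancels this growth in
   the alpha-part, while the kappa-part has kappa >= 2 > 1 and stays bounded. *)

Section PowerBounds.
Context {R : realType}.
Implicit Types a b t u x y : R.

Lemma powR_tangent_le t {x y} : 0 < x -> 0 < y ->
  x `^ t * (1 + t * (ln y - ln x)) <= y `^ t.
Proof.
move=> x0 y0; rewrite /powR !gt_eqF //.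
have -> : t * ln y = t * ln x + t * (ln y - ln x) by ring.
by rewrite expRD ler_wpM2l ?expR_ge0 ?expR_ge1Dx.
Qed.

Lemma ln_sub_le {x y} : 0 < x -> 0 < y -> ln y - ln x <= (y - x) / x.
Proof.
move=> x0 y0; rewrite -ln_div ?posrE //.
have -> : y / x = 1 + (y - x) / x by field; rewrite gt_eqF.
apply: le_ln1Dx; rewrite mulrBl mulfV ?gt_eqF //.
by have := divr_gt0 y0 x0; lra.
Qed.

Lemma powRN_div x a : 0 < x -> x `^ (- a) = x `^ (1 - a) / x.
Proof.
move=> x0; rewrite -{3}(powRr1 (ltW x0)) -powRB ?(gt_eqF x0) ?implybT //.
by congr (_ `^ _); ring.
Qed.

(* Young's inequality with the conjugate exponents 1/b and 1/(1-b). *)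
Lemma powR_le_affine {u b} : 0 <= u -> 0 < b < 1 -> u `^ b <= b * u + (1 - b).
Proof.
move=> u0 /andP[b0 b1]; have b1' : 0 < 1 - b by rewrite subr_gt0.
have := @conjugate_powR R (u `^ b) 1 b^-1 (1 - b)^-1 (powR_ge0 _ _) ler01.
rewrite !invr_gt0 !invrK b0 b1' mulr1 -powRrM mulfV ?gt_eqF // powRr1 //.
by rewrite powR1 mul1r [_ * b]mulrC => /(_ isT isT); apply; ring.
Qed.

Lemma powRN_sub_succ_le a x : 0 <= a -> 0 < x ->
  x * (x `^ (- a) - (x + 1) `^ (- a)) <= a * x `^ (- a).
Proof.
move=> a0 x0; have x1 : 0 < x + 1 by lra.
have := powR_tangent_le (- a) x0 x1; have := ln_sub_le x0 x1.
have := powR_ge0 x (- a); rewrite (_ : x + 1 - x = 1); last ring.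
set P := x `^ (- a); set L := ln (x + 1) - ln x => P0 hL hP.
have xL : x * L <= 1.
  by have := ler_wpM2l (ltW x0) hL; rewrite mul1r mulfV ?lt0r_neq0.
have := mulr_ge0 a0 P0; nra.
Qed.

Lemma inv_succ_le_ln_sub {x} : 0 < x -> (x + 1)^-1 <= ln (x + 1) - ln x.
Proof.
move=> x0; have x1 : 0 < x + 1 by lra.
have := ln_sub_le x1 x0; rewrite (_ : x - (x + 1) = -1); last ring.
by rewrite mulN1r; lra.
Qed.

Lemma powRN_succ_le_sub_gt1 a x : 1 < a -> 0 < x ->
  (a - 1) * (x + 1) `^ (- a) <= x `^ (1 - a) - (x + 1) `^ (1 - a).
Proof.
move=> a1 x0; have x1 : 0 < x + 1 by lra.
have := powR_tangent_le (1 - a) x1 x0; have := inv_succ_le_ln_sub x0.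
have := powR_ge0 (x + 1) (1 - a); rewrite powRN_div //.
rewrite (_ : ln x - ln (x + 1) = - (ln (x + 1) - ln x)); last ring.
set P := (x + 1) `^ (1 - a); set L := ln (x + 1) - ln x => P0 hL hP.
have : (a - 1) * (P / (x + 1)) <= (a - 1) * (P * L).
  by rewrite ler_wpM2l ?ler_wpM2l // subr_ge0 ltW.
nra.
Qed.

Lemma powRN_succ_le_sub_lt1 a x : 0 < a < 1 -> 0 <= x ->
  (1 - a) * (x + 1) `^ (- a) <= (x + 1) `^ (1 - a) - x `^ (1 - a).
Proof.
move=> /andP[a0 a1] x0; have x1 : 0 < x + 1 by lra.
have u0 : 0 <= x / (x + 1) by rewrite divr_ge0 // ltW.
have b01 : 0 < 1 - a < 1 by apply/andP; split; lra.
have := powR_le_affine u0 b01.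
have -> : (1 - a) * (x / (x + 1)) + (1 - (1 - a)) = 1 - (1 - a) / (x + 1).
  by field; rewrite lt0r_neq0.
have -> : x `^ (1 - a) = (x / (x + 1)) `^ (1 - a) * (x + 1) `^ (1 - a).
  by rewrite -powRM ?(ltW x1) // divfK ?lt0r_neq0.
have := powR_ge0 (x + 1) (1 - a); rewrite powRN_div //.
set U := (x / (x + 1)) `^ (1 - a); set P := (x + 1) `^ (1 - a) => P0 hU.
have := ler_wpM2r P0 hU; rewrite mulrBl mul1r; lra.
Qed.

Lemma powRN_le a x y : 0 <= a -> 0 < x <= y -> y `^ (- a) <= x `^ (- a).
Proof.
move=> a0 /andP[x0 xy]; have y0 : 0 < y by apply: lt_le_trans xy.
rewrite !powRN lef_pV2 ?posrE ?powR_gt0 //.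
by apply: ge0_ler_powR; rewrite // nnegrE ltW.
Qed.

End PowerBounds.

Section InversePowerSums.
Context {R : realType}.
Implicit Types a : R.

Definition sum_invpow a n := \sum_(2 <= k < n.+1) k%:R `^ (- a).

Lemma sum_invpow0 a : sum_invpow a 0 = 0.
Proof. by rewrite /sum_invpow big_geq. Qed.

Lemma sum_invpow_ge0 a n : 0 <= sum_invpow a n.
Proof. by apply: sumr_ge0 => k _; apply: powR_ge0. Qed.

Lemma sum_invpow_le_telescope a (G : nat -> R) n : (1 <= n)%N ->
  (forall m, (1 <= m)%N -> m.+1%:R `^ (- a) <= G m.+1 - G m) ->
  sum_invpow a n <= G n - G 1%N.
Proof.
move=> n1 hG; rewrite /sum_invpow big_add1 /= -(telescope_sumr _ n1).
by apply: ler_sum_nat => m /andP[m1 _]; apply: hG.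
Qed.

Lemma sum_invpow_gt1 a n : 1 < a -> sum_invpow a n <= (a - 1)^-1.
Proof.
move=> a1; have a10 : 0 < a - 1 by rewrite subr_gt0.
case: n => [|n]; first by rewrite sum_invpow0 ltW // invr_gt0.
pose G m := - (m%:R `^ (1 - a) / (a - 1)).
apply: (le_trans (sum_invpow_le_telescope a G n.+1 isT _)) => [m m1|].
  rewrite /G opprK addrC -mulrBl ler_pdivlMr // mulrC -natr1.
  by apply: powRN_succ_le_sub_gt1; rewrite // ltr0n.
rewrite /G powR1 mul1r opprK addrC lerBlDr lerDl.
by rewrite divr_ge0 ?powR_ge0 ?ltW.
Qed.

Lemma sum_invpow1_le_ln n : sum_invpow 1 n <= ln n%:R.
Proof.
case: n => [|n]; first by rewrite sum_invpow0 ln0.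
apply: (le_trans (sum_invpow_le_telescope 1 (fun m => ln m%:R) n.+1 isT _)).
  move=> m m1; rewrite powR_inv1 // -natr1.
  by apply: inv_succ_le_ln_sub; rewrite ltr0n.
by rewrite ln1 subr0.
Qed.

Lemma sum_invpow_lt1 a n : 0 < a < 1 ->
  sum_invpow a n <= n%:R `^ (1 - a) / (1 - a).
Proof.
move=> /andP[a0 a1]; have a10 : 0 < 1 - a by rewrite subr_gt0.
case: n => [|n]; first by rewrite sum_invpow0 divr_ge0 ?powR_ge0 ?ltW.
pose G m := m%:R `^ (1 - a) / (1 - a).
apply: (le_trans (sum_invpow_le_telescope a G n.+1 isT _)) => [m m1|].
  rewrite /G -mulrBl ler_pdivlMr // mulrC -natr1.
  by apply: powRN_succ_le_sub_lt1; rewrite ?a0 ?a1.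
by rewrite /G gerBl divr_ge0 ?powR_ge0 ?ltW.
Qed.

End InversePowerSums.

Section Means.
Context {R : realType}.

Lemma admissible_envelopes_ub (f g : nat -> R) :
  admissible_envelopes f g -> exists2 M, 0 <= M & forall k, f k <= M.
Proof.
case=> g0 gf [M hM] _ _; exists M => [|k]; last exact: (proj1 (hM k)).
by have := g0 0%N; have := gf 0%N; have := hM 0%N; lra.
Qed.

Lemma mean_upto_lincomb z (u v : R) (p1 p2 : nat -> R) :
  mean_upto z (fun k => u * p1 k + v * p2 k) =
  u * mean_upto z p1 + v * mean_upto z p2.
Proof.
by rewrite /mean_upto !mulr_sumr -big_split; apply: eq_bigr => k _ /=; ring.
Qed.

Lemma mean_upto_le_sum_invpow {a} {f g : nat -> R} {z p M} :
  0 < a -> in_L a f g z p -> (forall k, f k <= M) -> 0 <= M ->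
  mean_upto z p <= 1 + M * a * sum_invpow a z.
Proof.
move=> a0 [p0 _ p1 hp _] fM M0.
have -> : sum_invpow a z =
    \sum_(k < z.+1) (if (2 <= k)%N then k%:R `^ (- a) else 0).
  by rewrite /sum_invpow big_geq_mkord big_mkcond.
rewrite /mean_upto -[X in _ <= X + _]p1 mulr_sumr -big_split /=.
apply: ler_sum => k _.
case: ifPn => k2; last first.
  have k1 : k%:R <= 1 :> R by rewrite lern1 -ltnS ltnNge.
  by have := ler_wpM2r (p0 k) k1; rewrite mul1r mulr0 addr0.
have k0 : 0 < k%:R :> R by rewrite ltr0n (leq_trans _ k2).
have kz : (2 <= k <= z)%N by rewrite k2 -ltnS ltn_ord.
have [_ pk] := hp k kz.
set D := k%:R `^ (- a) - (1 + k%:R) `^ (- a) in pk *.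
have D0 : 0 <= D.
  by rewrite subr_ge0; apply: powRN_le; [exact: ltW | rewrite k0 /= lerDr].
have kD : k%:R * D <= a * k%:R `^ (- a).
  by rewrite /D [1 + _]addrC powRN_sub_succ_le ?ltW.
have := ler_wpM2l (ltW k0) (le_trans pk (ler_wpM2r D0 (fM k))).
have := ler_wpM2l M0 kD; have := p0 k; lra.
Qed.

Lemma mean_upto_le_gt1 {a} {f g : nat -> R} {z p M} :
  1 < a -> in_L a f g z p -> (forall k, f k <= M) -> 0 <= M ->
  mean_upto z p <= 1 + M * a / (a - 1).
Proof.
move=> a1 hp fM M0; have a0 : 0 < a by lra.
apply: (le_trans (mean_upto_le_sum_invpow a0 hp fM M0)).
by rewrite lerD2l ler_wpM2l ?sum_invpow_gt1 // mulr_ge0 // ltW.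
Qed.

End Means.

Section Asymptotics.
Context {R : realType}.

Lemma eqO_mul_bounded {e g s : nat -> R} (h : nat -> R) (c : R) :
  e =O_\oo g -> (forall N, 0 <= s N <= h N) -> (forall N, `|g N| * h N <= c) ->
  exists C, \forall N \near \oo, e N * s N <= C.
Proof.
move=> /eqO_exP[k k0 hk] hs hgh; exists (k * c); apply: filterS hk => N hN.
have [s0 sh] := andP (hs N).
have := ler_wpM2r s0 (le_trans (ler_norm (e N)) hN).
have := ler_wpM2l (mulr_ge0 (ltW k0) (normr_ge0 (g N))) sh.
have := ler_wpM2l (ltW k0) (hgh N); lra.
Qed.

Lemma eps_mul_sum_invpow_bounded
    {alpha : R} {zeta : nat -> nat} {eps : nat -> R} :
  0 < alpha -> (forall N, (0 < zeta N)%N) ->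
  (alpha < 1 -> eps =O_\oo (fun N => (zeta N)%:R `^ (alpha - 1))) ->
  (alpha = 1 -> eps =O_\oo (fun N => (ln ((zeta N)%:R))^-1)) ->
  (1 < alpha -> eps =O_\oo (fun N => (1 : R))) ->
  exists C, \forall N \near \oo, eps N * sum_invpow alpha (zeta N) <= C.
Proof.
move=> a0 z0 Olt O1 Ogt; case: (ltgtP alpha 1) => ha.
- apply: (eqO_mul_bounded (fun N => (zeta N)%:R `^ (1 - alpha) / (1 - alpha))
    (1 - alpha)^-1 (Olt ha)) => N.
    by rewrite sum_invpow_ge0 sum_invpow_lt1 ?a0 ?ha.
  rewrite ger0_norm ?powR_ge0 // mulrA -powRD; last first.
    by rewrite pnatr_eq0 -lt0n z0 implybT.
  by rewrite (_ : alpha - 1 + (1 - alpha) = 0) ?powRr0 ?mul1r //; ring.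
- apply: (eqO_mul_bounded (fun=> (alpha - 1)^-1) (alpha - 1)^-1 (Ogt ha)).
    by move=> N; rewrite sum_invpow_ge0 sum_invpow_gt1.
  by move=> N; rewrite normr1 mul1r.
- rewrite ha; apply: (eqO_mul_bounded (fun N => ln (zeta N)%:R) 1 (O1 ha)).
    by move=> N; rewrite sum_invpow_ge0 sum_invpow1_le_ln.
  move=> N; have lnz0 : 0 <= ln ((zeta N)%:R : R) by rewrite ln_ge0 // ler1n.
  rewrite ger0_norm ?invr_ge0 //.
  by have [->|nz] := eqVneq (ln ((zeta N)%:R : R)) 0; rewrite ?mulr0 // mulVf.
Qed.

Lemma limn_esup_le_near {u : nat -> R} (B : R) :
  (\forall n \near \oo, u n <= B) -> (limn_esup (fun n => (u n)%:E) <= B%:E)%E.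
Proof.
move=> [n0 _ hn0]; rewrite limn_esup_lim.
apply: lime_le; first exact: is_cvg_esups.
exists n0 => // n /= hn; apply: ge_ereal_sup => _ [k /= hk <-].
by rewrite lee_fin; apply: hn0; apply: leq_trans hk.
Qed.

End Asymptotics.

Theorem lemma5 (R : realType) (alpha kappa : R)
  (fa ga fk gk : nat -> R) (zeta : nat -> nat) (eps : nat -> R)
  (q r : nat -> nat -> R) :
  0 < alpha -> alpha < 2 -> 2 <= kappa ->
  admissible_envelopes fa ga -> admissible_envelopes fk gk ->
  (forall N, (0 < zeta N)%N) ->
  (forall N, 0 < eps N < 1) ->
  (forall N, in_L alpha fa ga (zeta N) (q N)) ->
  (forall N, in_L kappa fk gk (zeta N) (r N)) ->
  (alpha < 1 -> eps =O_\oo (fun N => (zeta N)%:R `^ (alpha - 1))) ->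
  (alpha = 1 -> eps =O_\oo (fun N => (ln ((zeta N)%:R))^-1)) ->
  (1 < alpha -> eps =O_\oo (fun N => (1 : R))) ->
  (limn_esup (fun N => (mean_upto (zeta N)
       (fun k => eps N * q N k + (1 - eps N) * r N k))%:E) < +oo)%E.
Proof.
move=> a0 _ k2 /admissible_envelopes_ub[Ma Ma0 fMa]
  /admissible_envelopes_ub[Mk Mk0 fMk] z0 eps01 hq hr Olt O1 Ogt.
have [C hC] := eps_mul_sum_invpow_bounded a0 z0 Olt O1 Ogt.
have k1 : 1 < kappa by lra.
apply: (le_lt_trans (limn_esup_le_near
  (1 + Ma * alpha * C + (1 + Mk * kappa / (kappa - 1))) _)); last exact: ltry.
apply: filterS hC => N hN; rewrite mean_upto_lincomb.
have [e0 e1] := andP (eps01 N).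
have Eq := mean_upto_le_sum_invpow a0 (hq N) fMa Ma0.
have Er := mean_upto_le_gt1 k1 (hr N) fMk Mk0.
have Er0 : 0 <= mean_upto (zeta N) (r N) by case: (hr N) => _ _ _ _; lra.
have := ler_wpM2l (ltW e0) Eq; have := ler_wpM2l (mulr_ge0 Ma0 (ltW a0)) hN.
have := mulr_ge0 (ltW e0) Er0; lra.
Qed.
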